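(* Each of the two non-abelian groups of order $27$ has both a narcissistic terrace and a directed half-and-half terrace. The non-abelian group of order $39$ has a directed half-and-half terrace.
   Context: Let $G$ be a finite group of odd order $n$ and $\mathbf{a}=(a_1,\dots,a_n)$ an arrangement of its elements, with $b_i = a_i^{-1}a_{i+1}$ for $1\le i \le n-1$. Since $n$ is odd, $G$ has no involutions; $\mathbf{a}$ is a terrace if for each $x \ne e$ the elements $x$ and $x^{-1}$ together occur exactly twice in $(b_1,\dots,b_{n-1})$, and a directed terrace if the $b_i$ are pairwise distinct. A terrace $\mathbf{a}$ is half-and-half if for each set $\{g,g^{-1}\}$ with $g\ne e$ exactly one element occurrence from that set lies in $(b_1,\dots,b_{(n-1)/2})$ (and hence exactly one lies in $(b_{(n+1)/2},\dots,b_{n-1})$). A terrace is narcissistic if the sequence $(b_1,\dots,b_{n-1})$ equals its reverse. A directed half-and-half terrace is a directed terrace that is half-and-half. There is a unique non-abelian group of order 39 up to isomorphism. *)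

From mathcomp Require Import all_boot all_fingroup.
Set Implicit Arguments. Unset Strict Implicit. Unset Printing Implicit Defensive.
Local Open Scope group_scope.

Section Terraces.
Variable gT : finGroupType.
Implicit Types (a b : seq gT) (x : gT).

Definition arrangement a : bool := perm_eq a (enum gT).

Definition quot_seq a : seq gT :=
  [seq (nth 1 a i)^-1 * nth 1 a i.+1 | i <- iota 0 (size a).-1].

Definition count_pm x b : nat := count (fun y => (y == x) || (y == x^-1)) b.

Definition terrace a : bool :=
  arrangement a && [forall x : gT, (x != 1) ==> (count_pm x (quot_seq a) == 2%N)].

Definition directed_terrace a : bool :=
  arrangement a && uniq (quot_seq a).

Definition half_and_half a : bool :=
  terrace a &&
  [forall x : gT, (x != 1) ==>
     (count_pm x (take ((size a).-1./2) (quot_seq a)) == 1%N)].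

Definition narcissistic_terrace a : bool :=
  terrace a && (quot_seq a == rev (quot_seq a)).

Definition directed_hh_terrace a : bool :=
  directed_terrace a && half_and_half a.

End Terraces.

From mathcomp Require Import all_boot all_fingroup all_solvable.
From mathcomp Require Import zify.
Set Implicit Arguments. Unset Strict Implicit. Unset Printing Implicit Defensive.

(* The non-abelian groups of order 27 are the modular group
   <x, y | x^9 = y^3 = 1, x^y = x^4> and the Heisenberg group
   <x, y | x^3 = y^3 = 1, [x, y] central>; the non-abelian group of order 39 is
   <x, y | x^13 = y^3 = 1, x^y = x^3>.  Numbering the normal forms y^j x^i (resp.
   y^j x^i [x, y]^k) by 0, ..., N-1 turns each group law into an explicit table on
   codes.  The terraces are exhibited as sequences of codes, checked against the table
   by computation, and carried to the abstract group along the normal-form map, which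
   is a bijective homomorphism because its image is a subgroup containing x and y. *)

Section CodeTable.
Variables (N : nat) (mul : nat -> nat -> nat).

Definition code_inv p := head 0 [seq q <- iota 0 N | mul p q == 0].

Definition code_quot_seq s :=
  [seq mul (code_inv (nth 0 s i)) (nth 0 s i.+1) | i <- iota 0 (size s).-1].

Definition code_count_pm m s := count (fun k => (k == m) || (k == code_inv m)) s.

Definition code_terrace s :=
  [&& all (gtn N) s, uniq s, size s == N &
      all (fun m => code_count_pm m (code_quot_seq s) == 2) (iota 1 N.-1)].

Definition code_narcissistic s :=
  code_terrace s && (code_quot_seq s == rev (code_quot_seq s)).

Definition code_directed_hh s :=
  [&& code_terrace s, uniq (code_quot_seq s) &
      all (fun m => code_count_pm m (take ((size s).-1./2) (code_quot_seq s)) == 1)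
          (iota 1 N.-1)].

Definition code_table_closed :=
  all (fun p => [&& code_inv p < N, mul p (code_inv p) == 0 &
                    all (fun q => mul p q < N) (iota 0 N)]) (iota 0 N).

Lemma code_table_closedP : code_table_closed -> forall p, p < N ->
  [/\ code_inv p < N, mul p (code_inv p) = 0 & forall q, q < N -> mul p q < N].
Proof.
move=> /allP closedN p pN; have pI : p \in iota 0 N by rewrite mem_iota.
have /and3P[-> /eqP -> /allP mulN] := closedN p pI.
by split=> // q qN; apply: mulN; rewrite mem_iota.
Qed.

End CodeTable.

Section CodeTransfer.
Local Open Scope group_scope.
Variables (gT : finGroupType) (N : nat) (mul : nat -> nat -> nat) (phi : nat -> gT).
Hypotheses (cardG : #|gT| = N) (closedN : code_table_closed N mul)
  (phiM : forall p q, p < N -> q < N -> phi (mul p q) = phi p * phi q)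
  (phi0 : phi 0 = 1) (phi_gen : <<[set phi k | k : 'I_N]>> = [set: gT]).

Lemma phiV p : p < N -> phi (code_inv N mul p) = (phi p)^-1.
Proof.
move=> pN; have [invN mulV _] := code_table_closedP closedN pN.
by apply: (mulgI (phi p)); rewrite mulgV -phiM // mulV phi0.
Qed.

Lemma code_image_group : group_set [set phi k | k : 'I_N].
Proof.
have N_gt0 : 0 < N by rewrite -cardG; apply/card_gt0P; exists 1.
apply/andP; split; first by apply/imsetP; exists (Ordinal N_gt0); rewrite ?inE.
apply/subsetP=> _ /mulsgP[_ _ /imsetP[i _ ->] /imsetP[j _ ->] ->].
have [_ _ mulN] := code_table_closedP closedN (ltn_ord i).
by apply/imsetP; exists (Ordinal (mulN j (ltn_ord j))); rewrite ?inE //= phiM.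
Qed.

Lemma code_image_full : [set phi k | k : 'I_N] = [set: gT].
Proof. by rewrite -phi_gen (genGid (Group code_image_group)). Qed.

Lemma phi_onto g : exists2 k, k < N & phi k = g.
Proof.
have : g \in [set phi k | k : 'I_N] by rewrite code_image_full inE.
by case/imsetP=> k _ ->; exists k.
Qed.

Lemma phi_inj : {in [pred k | k < N] &, injective phi}.
Proof.
have /imset_injP phi_injI : #|[set phi k | k : 'I_N]| == #|'I_N|.
  by rewrite code_image_full cardsT card_ord cardG.
move=> p q pN qN /(phi_injI (Ordinal pN) (Ordinal qN)).
by rewrite !inE => /(_ isT isT) [].
Qed.

Lemma nth_map_phi s i : nth 1 (map phi s) i = phi (nth 0 s i).
Proof. by elim: s i => [|k s IHs] [|i] //=; rewrite nth_nil phi0. Qed.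

Lemma nth_bounded s i : all (gtn N) s -> i < size s -> nth 0 s i < N.
Proof. by move=> sN ilt; apply: (allP sN); rewrite mem_nth. Qed.

Lemma code_quot_seq_bounded s :
  all (gtn N) s -> all (gtn N) (code_quot_seq N mul s).
Proof.
move=> sN; apply/allP=> k /mapP[i]; rewrite mem_iota add0n ltn_predRL => ilt ->.
have [invN _ _] := code_table_closedP closedN (nth_bounded sN (ltnW ilt)).
have [_ _ mulN] := code_table_closedP closedN invN.
exact/mulN/(nth_bounded sN).
Qed.

Lemma quot_seq_map s :
  all (gtn N) s -> quot_seq (map phi s) = map phi (code_quot_seq N mul s).
Proof.
move=> sN; rewrite /quot_seq /code_quot_seq size_map -map_comp.
apply/eq_in_map => i; rewrite mem_iota add0n ltn_predRL => ilt /=.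
have sNi := nth_bounded sN (ltnW ilt); have [invN _ _] := code_table_closedP closedN sNi.
by rewrite !nth_map_phi phiM ?phiV // (nth_bounded sN).
Qed.

Lemma count_pm_map m q : m < N -> all (gtn N) q ->
  count_pm (phi m) (map phi q) = code_count_pm N mul m q.
Proof.
move=> mN qN; rewrite /count_pm /code_count_pm count_map; apply: eq_in_count => k kq /=.
have [invN _ _] := code_table_closedP closedN mN.
rewrite -phiV //; congr (_ || _); apply/eqP/eqP => [|-> //]; exact: phi_inj (allP qN _ kq) _.
Qed.

Lemma count_pm_all_map q c : all (gtn N) q ->
  all (fun m => code_count_pm N mul m q == c) (iota 1 N.-1) ->
  [forall x : gT, (x != 1) ==> (count_pm x (map phi q) == c)].
Proof.
move=> qN /allP countq; apply/forallP => x; have [m mN <-] := phi_onto x.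
apply/implyP => phim_neq1; rewrite count_pm_map //; apply: countq; rewrite mem_iota.
by case: m mN phim_neq1 => [|m]; [rewrite phi0 eqxx | case: N].
Qed.

Lemma arrangement_map s : all (gtn N) s -> uniq s -> size s = N ->
  arrangement (map phi s).
Proof.
move=> sN s_uniq s_size; rewrite /arrangement; apply: uniq_perm; rewrite ?enum_uniq //.
  by rewrite map_inj_in_uniq // => p q ps qs; apply: phi_inj; apply: (allP sN).
have [_ s_iota] : (size s = size (iota 0 N)) * (s =i iota 0 N).
  apply: uniq_min_size => //; last by rewrite size_iota s_size.
  by move=> k ks; rewrite mem_iota add0n /=; apply: (allP sN).
move=> x; rewrite mem_enum; have [m mN <-] := phi_onto x.
by rewrite map_f // s_iota mem_iota.
Qed.

Lemma terrace_map s : code_terrace N mul s -> terrace (map phi s).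
Proof.
case/and4P=> sN s_uniq /eqP s_size counts.
rewrite /terrace arrangement_map // quot_seq_map //.
exact: count_pm_all_map (code_quot_seq_bounded sN) counts.
Qed.

Lemma narcissistic_terrace_map s :
  code_narcissistic N mul s -> narcissistic_terrace (map phi s).
Proof.
case/andP=> terr /eqP sym; have /and4P[sN _ _ _] := terr.
by rewrite /narcissistic_terrace terrace_map //= quot_seq_map // -map_rev -sym.
Qed.

Lemma directed_hh_terrace_map s :
  code_directed_hh N mul s -> directed_hh_terrace (map phi s).
Proof.
case/and3P=> terr q_uniq counts; have /and4P[sN s_uniq /eqP s_size _] := terr.
have qN := code_quot_seq_bounded sN.
rewrite /directed_hh_terrace /directed_terrace /half_and_half terrace_map //=.
rewrite arrangement_map //= quot_seq_map // map_inj_in_uniq ?q_uniq; last first.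
  by move=> p q ps qs; apply: phi_inj; apply: (allP qN).
rewrite size_map -map_take; apply: count_pm_all_map counts.
by apply/allP=> k /mem_take /(allP qN).
Qed.

End CodeTransfer.

(* The group laws of C_n x| C_3 (x^y = x^r) and of the Heisenberg group on the codes
   of the normal forms, see [sdprod_decode] and [heis_decode] below. *)
Definition sdprod_code_mul n r p q :=
  ((p %/ n + q %/ n) %% 3) * n + ((p %% n) * r ^ (q %/ n) + q %% n) %% n.

Definition heis_code_mul p q :=
  ((p %/ 9 + q %/ 9) %% 3) * 9 + (((p %/ 3) %% 3 + (q %/ 3) %% 3) %% 3) * 3
  + (p %% 3 + ((p %/ 3) %% 3) * (q %/ 9) + q %% 3) %% 3.

Section Decoding.
Local Open Scope group_scope.
Variable gT : finGroupType.
Implicit Types x y : gT.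

Definition sdprod_decode n x y k := y ^+ (k %/ n) * x ^+ (k %% n).

Definition heis_decode x y k :=
  y ^+ (k %/ 9) * x ^+ ((k %/ 3) %% 3) * [~ x, y] ^+ (k %% 3).

Lemma conjg_expgr x y r c : x ^ y = x ^+ r -> x ^ (y ^+ c) = x ^+ (r ^ c).
Proof.
move=> xy; elim: c => [|c IHc]; first by rewrite expg0 conjg1 expn0 expg1.
by rewrite expgSr conjgM IHc conjXg xy -expgM expnS.
Qed.

Lemma sdprod_decodeM n r x y : 0 < n -> x ^+ n = 1 -> y ^+ 3 = 1 -> x ^ y = x ^+ r ->
  forall p q, sdprod_decode n x y (sdprod_code_mul n r p q)
              = sdprod_decode n x y p * sdprod_decode n x y q.
Proof.
move=> n_gt0 xn y3 xy p q; rewrite /sdprod_decode /sdprod_code_mul.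
rewrite divnMDl // (divn_small (ltn_pmod _ n_gt0)) addn0 modnMDl modn_mod.
set a := p %/ n; set b := p %% n; set c := q %/ n; set d := q %% n.
rewrite (expg_mod (a + c) y3) (expg_mod (b * r ^ c + d) xn).
have xb_yc : x ^+ b * y ^+ c = y ^+ c * x ^+ (b * r ^ c).
  by rewrite conjgC conjXg (conjg_expgr c xy) -expgM mulnC.
by rewrite !expgD mulgA -(mulgA (y ^+ a)) -xb_yc !mulgA.
Qed.

Lemma heis_decodeM x y : x ^+ 3 = 1 -> y ^+ 3 = 1 ->
  commute [~ x, y] x -> commute [~ x, y] y ->
  forall p q, heis_decode x y (heis_code_mul p q) = heis_decode x y p * heis_decode x y q.
Proof.
move=> x3 y3 czx czy p q; rewrite /heis_decode /heis_code_mul; set z := [~ x, y].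
have z3 : z ^+ 3 = 1.
  have := conjXg x y 3; rewrite x3 conj1g conjg_mulR expgMn; last exact: commute_sym.
  by rewrite x3 mul1g => <-.
have digits A B C : B < 3 -> C < 3 -> [/\ (A * 9 + B * 3 + C) %/ 9 = A,
    ((A * 9 + B * 3 + C) %/ 3) %% 3 = B & (A * 9 + B * 3 + C) %% 3 = C].
  by move=> B_lt3 C_lt3; split; lia.
have [-> -> ->] := digits ((p %/ 9 + q %/ 9) %% 3) _ _
  (ltn_pmod ((p %/ 3) %% 3 + (q %/ 3) %% 3) (isT : 0 < 3))
  (ltn_pmod (p %% 3 + (p %/ 3) %% 3 * (q %/ 9) + q %% 3) (isT : 0 < 3)).
set j := p %/ 9; set i := (p %/ 3) %% 3; set k := p %% 3.
set l := q %/ 9; set m := (q %/ 3) %% 3; set n := q %% 3.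
rewrite (expg_mod (j + l) y3) (expg_mod (i + m) x3) (expg_mod (k + i * l + n) z3).
have zy a : (z ^+ a) ^ y = z ^+ a.
  by rewrite conjXg; congr (_ ^+ _); apply/conjg_fixP/commgP.
have xyb b : x ^ (y ^+ b) = x * z ^+ b.
  elim: b => [|b IHb]; first by rewrite conjg1 mulg1.
  by rewrite expgSr conjgM IHb conjMg conjg_mulR zy -mulgA -expgS.
have xi_yl : x ^+ i * y ^+ l = y ^+ l * (x ^+ i * z ^+ (i * l)).
  rewrite conjgC conjXg xyb expgMn; last by apply: commuteX; apply: commute_sym.
  by rewrite -expgM mulnC.
have zk_yl : z ^+ k * y ^+ l = y ^+ l * z ^+ k by apply: commuteX2.
have z_xm : z ^+ (i * l + k) * x ^+ m = x ^+ m * z ^+ (i * l + k) by apply: commuteX2.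
rewrite !mulgA -(mulgA _ (z ^+ k)) zk_yl mulgA -(mulgA _ (x ^+ i)) xi_yl !mulgA.
rewrite -(mulgA _ (z ^+ (i * l))) -(expgD z) -(mulgA _ _ (x ^+ m)) z_xm !mulgA.
by rewrite (addnC (i * l)%N k) !expgD !mulgA.
Qed.

End Decoding.

Section DecodedTerraces.
Local Open Scope group_scope.
Variable gT : finGroupType.
Implicit Types x y : gT.

Lemma codes_generate N (phi : nat -> gT) x y i j : i < N -> j < N ->
  phi i = x -> phi j = y -> <[x]> <*> <[y]> = [set: gT] ->
  <<[set phi k | k : 'I_N]>> = [set: gT].
Proof.
move=> iN jN <- <- gen; apply/eqP; rewrite eqEsubset subsetT -gen join_subG.
have phi_image k : k < N -> phi k \in [set phi k | k : 'I_N].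
  by move=> kN; apply/imsetP; exists (Ordinal kN).
by rewrite !cycle_subG !mem_gen ?phi_image.
Qed.

Lemma sdprod_terraces n r x y : 1 < n -> #|gT| = (3 * n)%N ->
  code_table_closed (3 * n) (sdprod_code_mul n r) ->
  x ^+ n = 1 -> y ^+ 3 = 1 -> x ^ y = x ^+ r -> <[x]> <*> <[y]> = [set: gT] ->
  (forall s, code_narcissistic (3 * n) (sdprod_code_mul n r) s ->
     narcissistic_terrace (map (sdprod_decode n x y) s)) /\
  (forall s, code_directed_hh (3 * n) (sdprod_code_mul n r) s ->
     directed_hh_terrace (map (sdprod_decode n x y) s)).
Proof.
move=> n_gt1 cardG closedN xn y3 xy gen; have n_gt0 := ltnW n_gt1.
have phiM p q (_ : p < 3 * n) (_ : q < 3 * n) := sdprod_decodeM n_gt0 xn y3 xy p q.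
have phi0 : sdprod_decode n x y 0 = 1 by rewrite /sdprod_decode div0n mod0n mulg1.
have phi_gen : <<[set sdprod_decode n x y k | k : 'I_(3 * n)]>> = [set: gT].
  apply: (@codes_generate _ _ _ _ 1 n _ _ _ _ gen); rewrite /sdprod_decode.
  - by rewrite (leq_trans n_gt1) // leq_pmull.
  - by rewrite ltn_Pmull.
  - by rewrite divn_small // modn_small // mul1g expg1.
  - by rewrite divnn n_gt0 modnn mulg1 expg1.
split=> s.
- exact: narcissistic_terrace_map cardG closedN phiM phi0 phi_gen s.
- exact: directed_hh_terrace_map cardG closedN phiM phi0 phi_gen s.
Qed.

Lemma heis_terraces x y : #|gT| = 27 -> code_table_closed 27 heis_code_mul ->
  x ^+ 3 = 1 -> y ^+ 3 = 1 -> commute [~ x, y] x -> commute [~ x, y] y ->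
  <[x]> <*> <[y]> = [set: gT] ->
  (forall s, code_narcissistic 27 heis_code_mul s ->
     narcissistic_terrace (map (heis_decode x y) s)) /\
  (forall s, code_directed_hh 27 heis_code_mul s ->
     directed_hh_terrace (map (heis_decode x y) s)).
Proof.
move=> cardG closedN x3 y3 czx czy gen.
have phiM p q (_ : p < 27) (_ : q < 27) := heis_decodeM x3 y3 czx czy p q.
have phi0 : heis_decode x y 0 = 1 by rewrite /heis_decode !mulg1.
have phi_gen : <<[set heis_decode x y k | k : 'I_27]>> = [set: gT].
  apply: (@codes_generate _ _ _ _ 3 9 _ _ _ _ gen) => //; rewrite /heis_decode /=.
  - by rewrite !mulg1 mul1g.
  - by rewrite !mulg1.
split=> s.
- exact: narcissistic_terrace_map cardG closedN phiM phi0 phi_gen s.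
- exact: directed_hh_terrace_map cardG closedN phiM phi0 phi_gen s.
Qed.

End DecodedTerraces.

Lemma cube_roots_of_unity_mod13 k : k ^ 3 = 1 %[mod 13] -> k %% 13 \in [:: 1; 3; 9].
Proof.
rewrite -modnXm; move: (ltn_pmod k (isT : 0 < 13)); move: (k %% 13) => j.
by do 13?[case: j => [|j] //].
Qed.

Section SmallGroups.
Local Open Scope group_scope.
Variable gT : finGroupType.
Implicit Types x y : gT.

Lemma nonabelian27_modular :
  #|[set: gT]| = 27 -> ~~ abelian [set: gT] -> [exists x : gT, #[x] == 9] ->
  exists x y : gT, [/\ x ^+ 9 = 1, y ^+ 3 = 1, x ^ y = x ^+ 4 & <[x]> <*> <[y]> = [set: gT]].
Proof.
move=> oG nabG /existsP[x0 /eqP ox0].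
have pG : 3.-group [set: gT] by rewrite /pgroup oG.
have iX : #|[set: gT] : <[x0]>| = 3 by rewrite -divgS ?subsetT // oG -orderE ox0.
have := maximal_cycle_extremal pG nabG (cycle_cyclic x0) (subsetT _) iX.
rewrite orbF => /eqP/modular_group_classP[p p_pr [n n_gt isoG]].
have n_gt2 : 2 < n by apply: leq_trans n_gt; rewrite leq_addl.
have oGp := card_isog isoG; rewrite card_modular_group // oG in oGp.
have p3 : p = 3.
  have : p \in primes 27 by rewrite mem_primes p_pr /= oGp dvdn_exp // ltnW // ltnW.
  by rewrite inE => /eqP.
subst p; have n3 : n = 3 by apply/eqP; rewrite -(eqn_exp2l _ _ (isT : 1 < 3)) -oGp.
subst n; have [[x y] genG [oy xy]] := generators_modular_group p_pr n_gt2 isoG.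
have [_ _ _ defG _] := extremal_generators_facts p_pr genG; have [_ _ ox _] := genG.
exists x, y; split; [by rewrite -(expg_order x) ox | by rewrite -(expg_order y) oy | by [] |].
by apply/eqP; rewrite eqEsubset subsetT -defG mul_subG ?joing_subl ?joing_subr.
Qed.

Lemma nonabelian27_heisenberg :
  #|[set: gT]| = 27 -> ~~ abelian [set: gT] -> ~~ [exists x : gT, #[x] == 9] ->
  exists x y : gT, [/\ x ^+ 3 = 1, y ^+ 3 = 1, commute [~ x, y] x, commute [~ x, y] y
                     & <[x]> <*> <[y]> = [set: gT]].
Proof.
move=> oG nabG no9.
have pG : 3.-group [set: gT] by rewrite /pgroup oG.
have expG : exponent [set: gT] %| 3.
  apply/exponentP => g _; apply/eqP; rewrite -order_dvdn.
  have : #[g] \in divisors 27 by rewrite -dvdn_divisors // -oG order_dvdG ?inE.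
  rewrite !inE => /or4P[] /eqP og; rewrite og //.
    by case/existsP: no9; exists g; rewrite og.
  case/negP: nabG; rewrite -(_ : <[g]> = [set: gT]) ?cycle_abelian //.
  by apply/eqP; rewrite eqEcard subsetT -orderE og oG.
have esG : extraspecial [set: gT] by apply: p3group_extraspecial pG nabG _; rewrite oG.
case/(isoGrpP _ (Grp_pX1p2 (isT : prime 3))): (isog_pX1p2 (isT : prime 3) esG expG oG) => _.
case/existsP=> -[x y] /= /eqP[defG x3 y3 /eqP cx /eqP cy].
by exists x, y; split=> //; apply/commgP.
Qed.

Lemma order39_join x y : #|[set: gT]| = 39 -> #[x] = 13 -> #[y] = 3 ->
  <[x]> <*> <[y]> = [set: gT].
Proof.
move=> oG ox oy; apply/eqP; rewrite eqEcard subsetT oG /=.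
have xJ : x \in <[x]> <*> <[y]> by rewrite mem_gen // inE cycle_id.
have yJ : y \in <[x]> <*> <[y]> by rewrite mem_gen // inE cycle_id orbT.
apply: dvdn_leq; first exact: cardG_gt0.
by rewrite (@Gauss_dvd 13 3) // -{1}ox -{1}oy !order_dvdG.
Qed.

Lemma order39_conj_cycle13 x y : #|[set: gT]| = 39 -> #[x] = 13 -> exists k, x ^ y = x ^+ k.
Proof.
move=> oG ox; have [P sylP] := Sylow_exists 13 [set: gT].
have oP : #|P| = 13 by rewrite (card_Hall sylP) oG p_part.
have nsP : P <| [set: gT].
  have [Q sylQ nsQ] : exists2 Q : {group gT}, 13.-Sylow([set: gT]) Q & Q <| [set: gT].
    apply/normal_sylowP; have := card_Syl_mod [set: gT] (isT : prime 13).
    have := card_Syl_dvd 13 [set: gT]; rewrite oG dvdn_divisors // !inE.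
    by case/or4P=> /eqP ->.
  have [g _ ->] := Sylow_trans sylQ sylP.
  by rewrite (normP (subsetP (normal_norm nsQ) g (in_setT g))).
have xP : x \in P.
  by rewrite (mem_normal_Hall sylP nsP) ?inE // /p_elt ox pnat_id.
have : x ^ y \in <[x]>.
  have -> : <[x]> = P by apply/eqP; rewrite eqEcard cycle_subG xP -orderE ox oP.
  by rewrite memJ_norm // (subsetP (normal_norm nsP)) ?inE.
by case/cycleP=> k xy; exists k.
Qed.

Lemma nonabelian39_presentation : #|[set: gT]| = 39 -> ~~ abelian [set: gT] ->
  exists x y : gT, [/\ x ^+ 13 = 1, y ^+ 3 = 1, x ^ y = x ^+ 3 & <[x]> <*> <[y]> = [set: gT]].
Proof.
move=> oG nabG.
have [x _ ox] : {x | x \in [set: gT] & #[x] = 13} by apply: Cauchy; rewrite ?oG.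
have [y _ oy] : {y | y \in [set: gT] & #[y] = 3} by apply: Cauchy; rewrite ?oG.
have x13 : x ^+ 13 = 1 by rewrite -ox expg_order.
have y3 : y ^+ 3 = 1 by rewrite -oy expg_order.
have [k xy] := order39_conj_cycle13 y oG ox.
have : k ^ 3 = 1 %[mod 13].
  by apply/eqP; rewrite -ox -eq_expg_mod_order expg1 -(conjg_expgr 3 xy) y3 conjg1.
rewrite -(expg_mod_order x) ox in xy.
move=> /cube_roots_of_unity_mod13; rewrite !inE => /or3P[] /eqP k13; rewrite k13 in xy.
- case/negP: nabG; rewrite -(order39_join oG ox oy) abelianY !cycle_abelian /=.
  rewrite cycle_subG /= cent_cycle; apply/cent1P; apply: commute_sym.
  by apply/commgP/conjg_fixP; rewrite xy expg1.
- by exists x, y; rewrite order39_join.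
- (* 9 ^ 2 = 3 mod 13, so y ^+ 2 acts as required. *)
  have oy2 : #[y ^+ 2] = 3 by rewrite orderXgcd oy.
  exists x, (y ^+ 2); rewrite order39_join //; split=> //.
    by rewrite -oy2 expg_order.
  by rewrite (conjg_expgr 2 xy) -(expg_mod_order x) ox.
Qed.

End SmallGroups.

Definition heis_narcissistic_codes := [:: 0; 16; 15; 24; 5; 25; 17; 11; 7; 2; 18; 23; 6; 9;
  22; 8; 1; 20; 21; 10; 13; 3; 26; 4; 12; 14; 19].
Definition heis_directed_hh_codes := [:: 0; 3; 20; 16; 21; 13; 9; 25; 15; 5; 11; 2; 6; 8;
  18; 19; 12; 22; 24; 7; 10; 14; 26; 23; 4; 17; 1].
Definition m27_narcissistic_codes := [:: 0; 23; 15; 10; 16; 1; 9; 17; 25; 13; 22; 24; 14;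
  21; 4; 18; 20; 5; 26; 7; 6; 11; 2; 8; 3; 19; 12].
Definition m27_directed_hh_codes := [:: 0; 3; 18; 17; 19; 12; 11; 5; 21; 10; 14; 2; 25; 23;
  8; 15; 16; 22; 24; 1; 13; 9; 26; 7; 4; 20; 6].
Definition g39_directed_hh_codes := [:: 0; 37; 33; 25; 14; 24; 10; 21; 11; 29; 4; 32; 15;
  23; 35; 34; 17; 9; 2; 36; 26; 20; 1; 6; 18; 16; 28; 5; 22; 30; 31; 38; 7; 19; 8; 13; 27;
  12; 3].

Lemma heis_table_closed : code_table_closed 27 heis_code_mul.
Proof. by vm_compute. Qed.

Lemma m27_table_closed : code_table_closed 27 (sdprod_code_mul 9 4).
Proof. by vm_compute. Qed.

Lemma g39_table_closed : code_table_closed 39 (sdprod_code_mul 13 3).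
Proof. by vm_compute. Qed.

Lemma heis_narcissistic_codesP : code_narcissistic 27 heis_code_mul heis_narcissistic_codes.
Proof. by vm_compute. Qed.

Lemma heis_directed_hh_codesP : code_directed_hh 27 heis_code_mul heis_directed_hh_codes.
Proof. by vm_compute. Qed.

Lemma m27_narcissistic_codesP :
  code_narcissistic 27 (sdprod_code_mul 9 4) m27_narcissistic_codes.
Proof. by vm_compute. Qed.

Lemma m27_directed_hh_codesP :
  code_directed_hh 27 (sdprod_code_mul 9 4) m27_directed_hh_codes.
Proof. by vm_compute. Qed.

Lemma g39_directed_hh_codesP :
  code_directed_hh 39 (sdprod_code_mul 13 3) g39_directed_hh_codes.
Proof. by vm_compute. Qed.

Theorem theorem11 :
  (forall gT : finGroupType,
     #|[set: gT]| = 27 -> ~~ abelian [set: gT] ->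
     (exists a : seq gT, narcissistic_terrace a) /\
     (exists a : seq gT, directed_hh_terrace a)) /\
  (forall gT : finGroupType,
     #|[set: gT]| = 39 -> ~~ abelian [set: gT] ->
     exists a : seq gT, directed_hh_terrace a).
Proof.
split=> gT oG nabG; have cardG := etrans (esym (cardsT gT)) oG.
  case: (boolP [exists x : gT, #[x]%g == 9]) => [has9 | no9].
    have [x [y [x9 y3 xy gen]]] := nonabelian27_modular oG nabG has9.
    have [narc dhh] := sdprod_terraces (isT : 1 < 9) cardG m27_table_closed x9 y3 xy gen.
    by split; eexists;
      [apply: narc m27_narcissistic_codesP | apply: dhh m27_directed_hh_codesP].
  have [x [y [x3 y3 czx czy gen]]] := nonabelian27_heisenberg oG nabG no9.
  have [narc dhh] := heis_terraces cardG heis_table_closed x3 y3 czx czy gen.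
  by split; eexists;
    [apply: narc heis_narcissistic_codesP | apply: dhh heis_directed_hh_codesP].
have [x [y [x13 y3 xy gen]]] := nonabelian39_presentation oG nabG.
have [_ dhh] := sdprod_terraces (isT : 1 < 13) cardG g39_table_closed x13 y3 xy gen.
by eexists; apply: dhh g39_directed_hh_codesP.
Qed.
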